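(* Suppose that $F$ is a good configuration, that $S_1$ and $S_2$ are two small squares of the tiling of $S$, and that $\mathcal P$ and $\mathcal P'$ are two point sets in $S$ belonging to $F$. If there is no edge in $G_{S,k}(\mathcal P)$ from any vertex in $S_1$ to any vertex in $S_2$, then there is no edge in $G_{S,k(1-\varepsilon)}(\mathcal P')$ from any vertex in $S_1$ to any vertex in $S_2$.
   Context: Fix $0<\varepsilon<\frac12$, a constant $M\ge 40$, an integer $N$ divisible by $21$ and sufficiently large in terms of $\varepsilon$ and $M$, and a positive integer $k$. Let $S=[-\frac12M\sqrt k,\frac12M\sqrt k]^2$, tiled by $(MN)^2$ closed-open small squares of side $\ell=\sqrt k/N$. For a finite point set $\mathcal P\subset S$ and integer $j$, $G_{S,j}(\mathcal P)$ is the undirected graph on $\mathcal P$ in which $x,y$ are adjacent if $y$ is one of the $j$ nearest neighbours of $x$ in $\mathcal P$ or vice versa; $G_{S,k(1-\varepsilon)}$ uses $k(1-\varepsilon)$ nearest neighbours (rounded down). For a small square $S_i$ containing $r$ points of $\mathcal P$, set $d(S_i)=0$ if $r=0$, $d(S_i)=\lceil N^3r/k\rceil/N$ if $1\le r\le k$, and $d(S_i)=\infty$ if $r>k$. The labelling $S_i\mapsto d(S_i)$ is a configuration $F$, and $\mathcal P$ belongs to $F$. Let $\Sigma$ be the set of circles whose centres are centres of small squares and which pass through the centre of at least one other small square; for $\Gamma\in\Sigma$ let $R_\Gamma$ be the set of small squares lying entirely within distance $\frac52\ell\sqrt2$ of $\Gamma$. $F$ is of Type A if some $S_i$ has $d(S_i)>N^2/21$;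 of Type B if for some $\Gamma\in\Sigma$, $\frac{k}{N^2}\sum_{S_i\in R_\Gamma} d(S_i)\ge \frac{\varepsilon k}{2}$. $F$ is good if it is of neither type. *)

From HB Require Import structures.
From mathcomp Require Import all_boot all_order all_algebra.
From mathcomp Require Import finmap boolp reals.
Import Order.TTheory GRing.Theory Num.Theory.
Local Open Scope fset_scope.
Local Open Scope ring_scope.

Definition pt (R : realType) := (R * R)%type.

Definition dist (R : realType) (x y : pt R) : R :=
  Num.sqrt ((x.1 - y.1) ^+ 2 + (x.2 - y.2) ^+ 2).

(* y is one of the j nearest neighbours of x in P: y is a point of P other
   than x, and fewer than j points of P (other than x) are strictly closer
   to x than y is. *)
Definition is_nn (R : realType) (j : nat) (P : {fset pt R}) (x y : pt R) : bool :=
  let closer := [fset z in P | (z != x) && (dist R x z < dist R x y)] in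
  [&& y \in P, y != x & (#|` closer| < j)%N].

Definition knn_adj (R : realType) (j : nat) (P : {fset pt R}) (x y : pt R) : bool :=
  [&& x \in P, y \in P & is_nn R j P x y || is_nn R j P y x].

(* half side of S = [-M sqrt k / 2, M sqrt k / 2]^2 *)
Definition half_side (R : realType) (M k : nat) : R := M%:R * Num.sqrt k%:R / 2.
Definition ell (R : realType) (N k : nat) : R := Num.sqrt k%:R / N%:R.

Definition in_S (R : realType) (M k : nat) (p : pt R) : bool :=
  [&& - half_side R M k <= p.1 <= half_side R M k &
      - half_side R M k <= p.2 <= half_side R M k].

(* coordinate t lies in the i-th closed-open strip; the last strip also
   contains its right (top) endpoint, so that the MN x MN small squares
   partition S *)
Definition in_strip (R : realType) (M N k : nat) (i : nat) (t : R) : bool :=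
  let a := - half_side R M k + i%:R * ell R N k in
  (a <= t) && ((t < a + ell R N k) || ((i.+1 == M * N)%N && (t == a + ell R N k))).

Definition sq (M N : nat) := ('I_(M * N) * 'I_(M * N))%type.

Definition in_sq (R : realType) (M N k : nat) (s : sq M N) (p : pt R) : bool :=
  in_strip R M N k s.1 p.1 && in_strip R M N k s.2 p.2.

Definition centre (R : realType) (M N k : nat) (s : sq M N) : pt R :=
  (- half_side R M k + (s.1%:R + 2^-1) * ell R N k,
   - half_side R M k + (s.2%:R + 2^-1) * ell R N k).

Definition count_sq (R : realType) (M N k : nat) (P : {fset pt R}) (s : sq M N) : nat :=
  #|` [fset p in P | in_sq R M N k s p]|.

(* the label d(S_i); None stands for infinity *)
Definition dlabel (R : realType) (M N k : nat) (P : {fset pt R}) (s : sq M N) : option R :=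
  let r := count_sq R M N k P s in
  if r == 0%N then Some 0
  else if (r <= k)%N then Some ((Num.ceil ((N ^ 3 * r)%:R / k%:R : R))%:~R / N%:R)
  else None.

Definition config (R : realType) (M N : nat) := sq M N -> option R.

Definition belongs (R : realType) (M N k : nat) (P : {fset pt R}) (F : config R M N) : Prop :=
  forall s, dlabel R M N k P s = F s.

Definition typeA (R : realType) (M N : nat) (F : config R M N) : Prop :=
  exists s, match F s with None => True | Some v => v > (N ^ 2)%:R / 21%:R end.

Definition in_closed_sq (R : realType) (M N k : nat) (s : sq M N) (p : pt R) : Prop :=
  let a := - half_side R M k + (s.1)%:R * ell R N k in
  let b := - half_side R M k + (s.2)%:R * ell R N k in
  a <= p.1 <= a + ell R N k /\ b <= p.2 <= b + ell R N k.

Definition in_RGamma (R : realType) (M N k : nat) (c : pt R) (r : R) (s : sq M N) : Prop :=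
  forall p, in_closed_sq R M N k s p ->
    exists q, dist R q c = r /\ dist R p q <= 5%:R / 2%:R * ell R N k * Num.sqrt 2%:R.

(* Sigma: circles centred at a centre of a small square s0 and passing through
   the centre of some other small square s1 *)
Definition typeB (R : realType) (M N k : nat) (eps : R) (F : config R M N) : Prop :=
  exists s0 s1 : sq M N, s0 != s1 /\
    let c := centre R M N k s0 in
    let r := dist R c (centre R M N k s1) in
    let RG := fun s => `[< in_RGamma R M N k c r s >] in
    (exists s, RG s /\ F s = None) \/
    k%:R / (N ^ 2)%:R * (\sum_(s | RG s) odflt 0 (F s)) >= eps * k%:R / 2%:R.

Definition good (R : realType) (M N k : nat) (eps : R) (F : config R M N) : Prop :=
  ~ typeA R M N F /\ ~ typeB R M N k eps F.

Definition kdown (R : realType) (k : nat) (eps : R) : nat := Num.truncn (k%:R * (1 - eps)).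

(* Equal labels force P and P' to have, square by square, the same empty
   squares and counts differing by at most k / N^3.  Let y be among the
   k(1 - eps) nearest neighbours of x in P' and pick x0, y0 in P in the squares
   of x and y.  A point of P closer to x0 than y0 lies either in a square all of
   whose points are closer to x than y, and these squares carry at most
   k(1 - eps) + (MN)^2 k / N^3 <= k(1 - eps / 2) points of P, or in a square
   within five half-diagonals of the circle centred at the centre of the first
   square through the centre of the second, and these carry fewer than
   eps k / 2 points because F is not of Type B.  So y0 is among the k nearest
   neighbours of x0 in P. *)

From HB Require Import structures.
From mathcomp Require Import all_boot all_order all_algebra.
From mathcomp Require Import finmap boolp reals.
From mathcomp Require Import ring lra.
Set Implicit Arguments.
Unset Strict Implicit.
Unset Printing Implicit Defensive.

Import Order.TTheory GRing.Theory Num.Theory.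
Local Open Scope fset_scope.
Local Open Scope ring_scope.

Section Distance.
Variable R : realType.
Implicit Types (x y z : pt R) (r t : R).

Lemma dist_ge0 x y : 0 <= dist R x y.
Proof. exact: sqrtr_ge0. Qed.

Lemma sqr_dist x y : dist R x y ^+ 2 = (x.1 - y.1) ^+ 2 + (x.2 - y.2) ^+ 2.
Proof. by rewrite sqr_sqrtr // addr_ge0 ?sqr_ge0. Qed.

Lemma dist_le x y t : 0 <= t ->
  (x.1 - y.1) ^+ 2 + (x.2 - y.2) ^+ 2 <= t ^+ 2 -> dist R x y <= t.
Proof. by move=> t0; rewrite -sqr_dist ler_sqr // nnegrE dist_ge0. Qed.

Lemma distC x y : dist R x y = dist R y x.
Proof. by rewrite /dist; congr Num.sqrt; ring. Qed.

Lemma distxx x : dist R x x = 0.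
Proof. by rewrite /dist !subrr expr0n /= addr0 sqrtr0. Qed.

Lemma dist_eq0 x y : dist R x y = 0 -> x = y.
Proof.
move=> d0; have hd : (x.1 - y.1) ^+ 2 + (x.2 - y.2) ^+ 2 = 0.
  by rewrite -sqr_dist d0 expr0n.
have := sqr_ge0 (x.1 - y.1); have := sqr_ge0 (x.2 - y.2) => h2 h1.
have /eqP : (x.1 - y.1) ^+ 2 = 0 by lra.
have /eqP : (x.2 - y.2) ^+ 2 = 0 by lra.
rewrite !sqrf_eq0 !subr_eq0 => /eqP e2 /eqP e1.
by case: x y e1 e2 {d0 hd h1 h2} => a b [c d] /= -> ->.
Qed.

Lemma dist_gt0 x y : x != y -> 0 < dist R x y.
Proof.
by move=> ne; rewrite lt0r dist_ge0 andbT; apply: contra ne => /eqP/dist_eq0->.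
Qed.

Lemma dist_triangle x y z : dist R x z <= dist R x y + dist R y z.
Proof.
have g1 := dist_ge0 x y; have g2 := dist_ge0 y z.
have cauchy_schwarz : (x.1 - y.1) * (y.1 - z.1) + (x.2 - y.2) * (y.2 - z.2)
    <= dist R x y * dist R y z.
  apply: le_trans (ler_norm _) _.
  rewrite -ler_sqr ?nnegrE ?mulr_ge0 // real_normK ?num_real // exprMn !sqr_dist.
  have := sqr_ge0 ((x.1 - y.1) * (y.2 - z.2) - (x.2 - y.2) * (y.1 - z.1)); nra.
rewrite -ler_sqr ?nnegrE ?dist_ge0 ?addr_ge0 //.
have := sqr_dist x y; have := sqr_dist y z; have := sqr_dist x z; nra.
Qed.

(* The witness is the radial projection of p onto the circle (any point of
   the circle if p = c). *)
Lemma near_circle c p r e : 0 <= r -> 0 <= e ->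
  r - e <= dist R c p <= r + e -> exists q, dist R q c = r /\ dist R p q <= e.
Proof.
move=> r0 e0; have [<-|/dist_gt0 dpos] := eqVneq c p; move=> /andP[lo hi].
  rewrite distxx in lo; exists (c.1 + r, c.2); split.
    by rewrite /dist /= subrr expr0n addr0 addrAC subrr add0r sqrtr_sqr ger0_norm.
  by apply: dist_le => //=; nra.
set d := dist R c p in lo hi dpos.
have hd : d ^+ 2 = (c.1 - p.1) ^+ 2 + (c.2 - p.2) ^+ 2 by rewrite sqr_dist.
clearbody d.
exists (c.1 + r / d * (p.1 - c.1), c.2 + r / d * (p.2 - c.2)); split.
  apply: (pexpIrn (n := 2)); rewrite ?nnegrE ?dist_ge0 // sqr_dist /=.
  transitivity ((r / d) ^+ 2 * ((c.1 - p.1) ^+ 2 + (c.2 - p.2) ^+ 2)); first by ring.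
  by rewrite -hd; field; rewrite gt_eqF.
apply: dist_le => //=.
rewrite (_ : _ + _ = (1 - r / d) ^+ 2 * d ^+ 2); last by rewrite hd /=; ring.
have -> : (1 - r / d) ^+ 2 * d ^+ 2 = (d - r) ^+ 2 by field; rewrite gt_eqF.
have h1 : 0 <= e - (d - r) by lra.
have h2 : 0 <= e + (d - r) by lra.
by have := mulr_ge0 h1 h2; nra.
Qed.

End Distance.

Lemma card_fset_sep (T : choiceType) (A : {fset T}) (Q : pred T) :
  #|` [fset z in A | Q z]| = (\sum_(z <- A) Q z)%N.
Proof.
rewrite card_fset_sum1 -big_fset_condE big_mkcond /=.
by apply: eq_bigr => z _; case: (Q z).
Qed.

Section Tiling.
Variables (R : realType) (M N k : nat).
Hypotheses (M_gt0 : (0 < M)%N) (N_gt0 : (0 < N)%N) (k_gt0 : (0 < k)%N).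

Local Notation l := (ell R N k).
Local Notation h := (half_side R M k).

Definition half_diag := l * Num.sqrt 2%:R / 2%:R.

Lemma ell_gt0 : 0 < l.
Proof. by rewrite /ell divr_gt0 ?ltr0n // sqrtr_gt0 ltr0n. Qed.

Lemma half_sideE : h = (M * N)%:R * l / 2.
Proof. by rewrite /half_side /ell natrM; field; rewrite pnatr_eq0 -lt0n. Qed.

Lemma half_diag_ge0 : 0 <= half_diag.
Proof. by rewrite /half_diag !mulr_ge0 ?sqrtr_ge0 ?invr_ge0 ?ler0n ?ltW ?ell_gt0. Qed.

Lemma sqr_half_diag : half_diag ^+ 2 = l ^+ 2 / 2.
Proof.
by rewrite /half_diag /ell !exprMn !sqr_sqrtr ?ler0n //; field; rewrite pnatr_eq0 -lt0n.
Qed.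

Lemma in_strip_closed i t : in_strip R M N k i t ->
  - h + i%:R * l <= t <= - h + i%:R * l + l.
Proof. by case/andP=> -> /orP[/ltW -> | /andP[_ /eqP ->]]; rewrite ?lexx. Qed.

Lemma in_sq_closed (s : sq M N) p : in_sq R M N k s p -> in_closed_sq R M N k s p.
Proof. by case/andP=> /in_strip_closed h1 /in_strip_closed h2; split. Qed.

Lemma dist_centre_le (s : sq M N) p : in_closed_sq R M N k s p ->
  dist R p (centre R M N k s) <= half_diag.
Proof.
move=> [/andP[a1 a2] /andP[b1 b2]]; apply: dist_le; first exact: half_diag_ge0.
rewrite sqr_half_diag /centre /=.
set A := - h + (s.1)%:R * l in a1 a2 *; set B := - h + (s.2)%:R * l in b1 b2 *.
have -> : - h + ((s.1)%:R + 2^-1) * l = A + l / 2 by rewrite /A; field.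
have -> : - h + ((s.2)%:R + 2^-1) * l = B + l / 2 by rewrite /B; field.
by have := ell_gt0; nra.
Qed.

Lemma dist_closed_sq_le (s : sq M N) p q : in_closed_sq R M N k s p ->
  in_closed_sq R M N k s q -> dist R p q <= half_diag *+ 2.
Proof.
move=> hp hq; apply: le_trans (dist_triangle p (centre R M N k s) q) _.
by rewrite mulr2n lerD ?dist_centre_le // distC dist_centre_le.
Qed.

Lemma in_strip_uniq (i j : nat) t : (i < M * N)%N -> (j < M * N)%N ->
  in_strip R M N k i t -> in_strip R M N k j t -> i = j.
Proof.
have lp := ell_gt0.
wlog ij : i j / (i < j)%N => [hw|].
  by case: (ltngtP i j) => // [/hw|/hw h' *]; last apply/esym/h'.
move=> _ jm /andP[_ ti] /andP[tj _]; exfalso.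
have : (i.+1)%:R * l <= j%:R * l by rewrite ler_pM2r // ler_nat.
rewrite -addn1 natrD mulrDl mul1r => le_ij.
case/orP: ti => [|/andP[/eqP ei _]]; first lra.
by move: jm; rewrite -ei ltnNge ij.
Qed.

Lemma in_strip_exists t : - h <= t <= h ->
  exists2 i : nat, (i < M * N)%N & in_strip R M N k i t.
Proof.
move=> /andP[t1 t2]; have lp := ell_gt0.
have m0 : (0 < M * N)%N by rewrite muln_gt0 M_gt0 N_gt0.
set m := (M * N)%N in m0 *.
have he : h = m%:R * l / 2 by rewrite half_sideE.
set u := (t + h) / l.
have tE : t = - h + u * l by rewrite /u; field; rewrite gt_eqF.
have u0 : 0 <= u by rewrite /u divr_ge0 ?(ltW lp) //; lra.
have um : u <= m%:R by rewrite /u ler_pdivrMr //; lra.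
have [nm|mn] := ltnP (Num.truncn u) m.
  exists (Num.truncn u) => //.
  have /andP[n1 n2] := truncn_itv u0.
  rewrite /in_strip tE lerD2l ler_pM2r //= -addrA ltrD2l.
  by rewrite -[X in _ < _ + X]mul1r -mulrDl ltr_pM2r // n1 natr1 n2.
have um' : u = m%:R by apply/le_anti; rewrite um -truncn_ge_nat.
exists m.-1; first by rewrite prednK.
have mE : m%:R = m.-1%:R + 1 :> R by rewrite natr1 prednK.
by rewrite /in_strip prednK // eqxx tE um' mE mulrDl mul1r addrA lerDl ltW ?eqxx ?orbT.
Qed.

Lemma in_sq_exists p : in_S R M k p -> exists s : sq M N, in_sq R M N k s p.
Proof.
case/andP=> /in_strip_exists[i hi si] /in_strip_exists[j hj sj].
by exists (Ordinal hi, Ordinal hj); rewrite /in_sq si sj.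
Qed.

Lemma in_sq_uniq (s s' : sq M N) p :
  in_sq R M N k s p -> in_sq R M N k s' p -> s = s'.
Proof.
case: s s' => [i j] [i' j'] /andP[/= a b] /andP[/= a' b'].
by congr pair; apply: val_inj;
  [exact: in_strip_uniq (ltn_ord i) (ltn_ord i') a a'
  |exact: in_strip_uniq (ltn_ord j) (ltn_ord j') b b'].
Qed.

Lemma card_fset_in_S (A : {fset pt R}) : (forall p, p \in A -> in_S R M k p) ->
  #|` A| = (\sum_(s : sq M N) count_sq R M N k A s)%N.
Proof.
move=> AS; rewrite /count_sq.
under eq_bigr => s _ do rewrite card_fset_sep.
rewrite exchange_big /= card_fset_sum1 big_seq [RHS]big_seq.
apply: eq_bigr => p /AS /in_sq_exists[s0 hs0].
rewrite (bigD1 s0) //= hs0 big1 // => s /negPf ns.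
by case hs: (in_sq R M N k s p) => //; move: ns; rewrite (in_sq_uniq hs hs0) eqxx.
Qed.

End Tiling.

Section Counts.
Variables (R : realType) (M N k : nat).
Implicit Types (Q : {fset pt R}) (s : sq M N).

Lemma count_sq_gt0P Q s :
  reflect (exists2 z, z \in Q & in_sq R M N k s z) (0 < count_sq R M N k Q s)%N.
Proof.
rewrite /count_sq cardfs_gt0; apply: (iffP (fset0Pn _)) => [[z]|[z zQ zs]].
  by rewrite !inE => /andP[]; exists z.
by exists z; rewrite !inE zQ.
Qed.

Lemma count_sq_sub Q (Q' : {fset pt R}) s :
  (forall z, z \in Q -> in_sq R M N k s z -> z \in Q') ->
  (count_sq R M N k Q s <= count_sq R M N k Q' s)%N.
Proof.
move=> QQ'; apply/fsubset_leq_card/fsubsetP => z; rewrite !inE => /andP[zQ zs].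
by rewrite QQ'.
Qed.

End Counts.

Section Labels.
Variables (R : realType) (M N k : nat).
Hypotheses (N_gt0 : (0 < N)%N) (k_gt0 : (0 < k)%N).
Implicit Types (P : {fset pt R}) (s : sq M N).

(* A label is [ceil (scaled r) / N], and one unit of [scaled r] is [k / N^3]
   points. *)
Let scaled (r : nat) : R := (N ^ 3 * r)%:R / k%:R.

Let count_scaled (r : nat) : r%:R = k%:R / N%:R ^+ 3 * scaled r.
Proof. by rewrite /scaled natrM natrX; field; rewrite !pnatr_eq0 -!lt0n N_gt0 k_gt0. Qed.

Let dlabel_pos P s (r := count_sq R M N k P s) : (0 < r)%N -> (r <= k)%N ->
  dlabel R M N k P s = Some ((Num.ceil (scaled r))%:~R / N%:R).
Proof. by rewrite /dlabel -/r lt0n => /negPf -> ->. Qed.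

Let ceil_scaled_gt0 (r : nat) : (0 < r)%N -> 0 < (Num.ceil (scaled r))%:~R / N%:R :> R.
Proof.
move=> r0; rewrite divr_gt0 ?ltr0n // (lt_le_trans _ (ceil_ge _)) //.
by rewrite divr_gt0 ?ltr0n // muln_gt0 expn_gt0 N_gt0.
Qed.

Lemma count_le_dlabel P s d : dlabel R M N k P s = Some d ->
  (count_sq R M N k P s)%:R <= k%:R / N%:R ^+ 2 * d.
Proof.
rewrite /dlabel; set r := count_sq R M N k P s.
case: eqP => [-> [<-]|_]; first by rewrite mulr0.
case: leqP => // _ [<-]; rewrite -/(scaled r) [X in X <= _]count_scaled.
have := ceil_ge (scaled r); set q : R := (Num.ceil (scaled r))%:~R => hq.
have -> : k%:R / N%:R ^+ 2 * (q / N%:R) = k%:R / N%:R ^+ 3 * q.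
  by field; rewrite pnatr_eq0 -lt0n N_gt0.
by rewrite ler_pM2l ?divr_gt0 ?exprn_gt0 ?ltr0n.
Qed.

Lemma count_sq_gt0_same_label P P' s :
  dlabel R M N k P s = dlabel R M N k P' s ->
  (0 < count_sq R M N k P' s)%N -> (count_sq R M N k P' s <= k)%N ->
  (0 < count_sq R M N k P s)%N.
Proof.
move=> same r0 rk; rewrite lt0n; apply/eqP => r00; move: same.
rewrite (dlabel_pos r0 rk) /dlabel r00 /= => -[] /esym/eqP.
by rewrite gt_eqF // ceil_scaled_gt0.
Qed.

Lemma count_sq_le_same_label P P' s :
  dlabel R M N k P s = dlabel R M N k P' s ->
  (count_sq R M N k P s <= k)%N -> (count_sq R M N k P' s <= k)%N ->
  (count_sq R M N k P s)%:R <= (count_sq R M N k P' s)%:R + k%:R / N%:R ^+ 3 :> R.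
Proof.
move=> same rk rk'; set r := count_sq R M N k P s; set r' := count_sq R M N k P' s.
have [r0|rpos] := posnP r.
  by rewrite r0 addr_ge0 ?divr_ge0 ?exprn_ge0 ?ler0n.
have r'pos := count_sq_gt0_same_label (esym same) rpos rk.
move: same; rewrite (dlabel_pos rpos rk) (dlabel_pos r'pos rk') -/r -/r' => -[].
move/(congr1 ( *%R^~ N%:R)); rewrite !divfK ?pnatr_eq0 -?lt0n // => /intr_inj ceil_eq.
have := ceil_ge (scaled r); have := ceilB1_lt (scaled r'); rewrite -ceil_eq intrD => h1 h2.
rewrite (count_scaled r) (count_scaled r') -[X in _ <= _ + X]mulr1 -mulrDr.
by rewrite ler_pM2l ?divr_gt0 ?exprn_gt0 ?ltr0n //; lra.
Qed.

End Labels.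

Lemma card_closer_le (R : realType) (Q : {fset pt R}) (x y : pt R) :
  (#|` [fset z in Q | (dist R x z < dist R x y)%R]|
    <= (#|` [fset z in Q | (z != x) && (dist R x z < dist R x y)%R]|).+1)%N.
Proof.
set C := [fset z in Q | _ && _].
apply: leq_trans (_ : #|` x |` C| <= _)%N; last by rewrite cardfsU1 -add1n leq_add2r leq_b1.
apply/fsubset_leq_card/fsubsetP => z; rewrite !inE => /andP[zQ ->].
by case: eqP => //= _; rewrite andbT.
Qed.

(* Both bounds on dist(c, p) go through the triangle inequality, each vertex
   of the chain costing one half-diagonal, five in total. *)
Lemma straddling_sq_in_RGamma (R : realType) (M N k : nat) (A B s : sq M N)
    (x y x0 y0 z w : pt R) : (0 < N)%N -> (0 < k)%N ->
  in_sq R M N k A x -> in_sq R M N k A x0 ->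
  in_sq R M N k B y -> in_sq R M N k B y0 ->
  in_sq R M N k s z -> in_sq R M N k s w ->
  dist R x0 z < dist R x0 y0 -> dist R x y <= dist R x w ->
  in_RGamma R M N k (centre R M N k A) (dist R (centre R M N k A) (centre R M N k B)) s.
Proof.
move=> N_gt0 k_gt0 /in_sq_closed xA /in_sq_closed x0A /in_sq_closed yB /in_sq_closed y0B.
move=> /in_sq_closed zs /in_sq_closed ws z_lt w_ge p ps.
have -> : 5%:R / 2%:R * ell R N k * Num.sqrt 2%:R = 5%:R * half_diag R N k.
  by rewrite /half_diag; field.
have hd0 := half_diag_ge0 R N k.
have x_c := dist_centre_le N_gt0 k_gt0 xA; have x0_c := dist_centre_le N_gt0 k_gt0 x0A.
have y_c' := dist_centre_le N_gt0 k_gt0 yB; have y0_c' := dist_centre_le N_gt0 k_gt0 y0B.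
have := dist_closed_sq_le N_gt0 k_gt0 ps ws; have := dist_closed_sq_le N_gt0 k_gt0 zs ps.
rewrite !mulr2n => z_p p_w.
set c := centre R M N k A in x_c x0_c *; set c' := centre R M N k B in y_c' y0_c' *.
apply: near_circle; [exact: dist_ge0 | by rewrite mulr_ge0 ?ler0n | apply/andP; split].
- have := dist_triangle x c w; have := dist_triangle c p w.
  have := dist_triangle x y c'; have := dist_triangle c x c'.
  have := distC c x; lra.
- have := dist_triangle c x0 p; have := dist_triangle x0 z p.
  have := dist_triangle x0 c y0; have := dist_triangle c c' y0.
  have := distC c x0; have := distC c' y0; lra.
Qed.

Section Transfer.
Variables (R : realType) (M N k : nat) (eps : R) (F : config R M N).
Hypotheses (M_gt0 : (0 < M)%N) (N_gt0 : (0 < N)%N) (k_gt0 : (0 < k)%N).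
Hypotheses (eps_le1 : eps <= 1) (N_large : (M ^ 2)%:R / N%:R <= eps / 2).
Hypotheses (notA : ~ typeA R M N F) (notB : ~ typeB R M N k eps F).
Variables P P' : {fset pt R}.
Hypotheses (P_S : forall p, p \in P -> in_S R M k p)
  (P'_S : forall p, p \in P' -> in_S R M k p).
Hypotheses (PF : belongs R M N k P F) (P'F : belongs R M N k P' F).

Lemma count_sq_le_notA (Q : {fset pt R}) s : belongs R M N k Q F ->
  (count_sq R M N k Q s <= k)%N.
Proof.
move=> QF; rewrite leqNgt; apply/negP => Qs; apply: notA; exists s.
by rewrite -QF /dlabel gtn_eqF ?(leq_ltn_trans _ Qs) // leqNgt Qs.
Qed.

Lemma count_le_config (Q : {fset pt R}) s : belongs R M N k Q F ->
  (count_sq R M N k Q s)%:R <= k%:R / N%:R ^+ 2 * odflt 0 (F s).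
Proof.
move=> QF; case Fs: (F s) => [d|]; last by case: notA; exists s; rewrite Fs.
by apply: count_le_dlabel; rewrite // QF.
Qed.

Lemma same_dlabel s : dlabel R M N k P s = dlabel R M N k P' s.
Proof. by rewrite PF P'F. Qed.

Lemma exists_in_same_sq s z : z \in P' -> in_sq R M N k s z ->
  exists2 z0, z0 \in P & in_sq R M N k s z0.
Proof.
move=> zP' zs; apply/count_sq_gt0P/(count_sq_gt0_same_label N_gt0 k_gt0 (same_dlabel s)).
  by apply/count_sq_gt0P; exists z.
exact: count_sq_le_notA.
Qed.

Section Closer.
Variables (A B : sq M N) (x y x0 y0 : pt R).
Hypothesis AB : A != B.
Hypotheses (xA : in_sq R M N k A x) (x0A : in_sq R M N k A x0).
Hypotheses (yB : in_sq R M N k B y) (y0B : in_sq R M N k B y0).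

Let near s :=
  `[< in_RGamma R M N k (centre R M N k A) (dist R (centre R M N k A) (centre R M N k B)) s >].
Let inner s := `[< forall w, in_sq R M N k s w -> dist R x w < dist R x y >].
Let D := [fset z in P | dist R x0 z < dist R x0 y0].
Let E := [fset z in P' | dist R x z < dist R x y].

Let count_closer_sq_le s : (count_sq R M N k D s)%:R <=
    (if near s then (count_sq R M N k P s)%:R else 0) +
    (if inner s then (count_sq R M N k E s)%:R + k%:R / N%:R ^+ 3 else 0) :> R.
Proof.
have unit_ge0 : 0 <= k%:R / N%:R ^+ 3 :> R by rewrite divr_ge0 ?exprn_ge0 ?ler0n.
have DP : (count_sq R M N k D s <= count_sq R M N k P s)%N.
  by apply: count_sq_sub => z; rewrite !inE => /andP[].
case: ifP => [_|far].
  by rewrite ler_wpDr ?ler_nat //; case: ifP; rewrite ?addr_ge0 ?ler0n.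
rewrite add0r; case: ifPn => [/asboolP inner_s|outer].
  have P'E : (count_sq R M N k P' s <= count_sq R M N k E s)%N.
    by apply: count_sq_sub => z zP' zs; rewrite !inE zP' inner_s.
  apply: le_trans (_ : (count_sq R M N k P s)%:R <= _); first by rewrite ler_nat.
  have := count_sq_le_same_label N_gt0 k_gt0 (same_dlabel s)
    (count_sq_le_notA s PF) (count_sq_le_notA s P'F).
  by move/le_trans; apply; rewrite lerD2r ler_nat.
suff /eqP -> : count_sq R M N k D s == 0%N by [].
rewrite -leqn0 leqNgt; apply/negP => /count_sq_gt0P[z].
rewrite !inE => /andP[_ z_closer] zs.
move/asboolPn: outer; rewrite -existsNE => -[w /not_implyP[ws /negP]].
rewrite -leNgt => w_farther; move/negP: far; apply; apply/asboolP.
exact: straddling_sq_in_RGamma xA x0A yB y0B zs ws z_closer w_farther.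
Qed.

Let card_in_S (Q : {fset pt R}) : (forall p, p \in Q -> in_S R M k p) ->
  (#|` Q|)%:R = \sum_s (count_sq R M N k Q s)%:R :> R.
Proof. by move=> QS; rewrite (card_fset_in_S M_gt0 N_gt0 k_gt0 QS) natr_sum. Qed.

Lemma card_closer_lt : (#|` D|)%:R < (#|` E|)%:R + eps * k%:R.
Proof.
have near_lt : \sum_s (if near s then (count_sq R M N k P s)%:R else 0)
    < eps * k%:R / 2 :> R.
  apply: le_lt_trans (_ : _ <= k%:R / N%:R ^+ 2 * \sum_(s | near s) odflt 0 (F s)) _.
    by rewrite -big_mkcond mulr_sumr; apply: ler_sum => s _; apply: count_le_config.
  rewrite ltNge; apply/negP => ge; apply: notB; exists A, B; split => //.
  by right; rewrite natrX.
have inner_le : \sum_s (if inner s then (count_sq R M N k E s)%:R + k%:R / N%:R ^+ 3 else 0)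
    <= (#|` E|)%:R + eps * k%:R / 2 :> R.
  apply: le_trans (_ : _ <= \sum_(s : sq M N) ((count_sq R M N k E s)%:R + k%:R / N%:R ^+ 3)) _.
    by apply: ler_sum => s _; case: ifP; rewrite ?addr_ge0 ?divr_ge0 ?exprn_ge0 ?ler0n.
  have ES p : p \in E -> in_S R M k p by rewrite !inE => /andP[/P'_S].
  rewrite big_split /= -(card_in_S ES).
  rewrite sumr_const card_prod card_ord lerD2l -[X in X <= _]mulr_natl.
  have -> : ((M * N) * (M * N))%:R * (k%:R / N%:R ^+ 3) = (M ^ 2)%:R / N%:R * k%:R :> R.
    by rewrite !natrM; field; rewrite pnatr_eq0 -lt0n.
  by rewrite [X in _ <= X]mulrAC ler_wpM2r ?ler0n.
have DS p : p \in D -> in_S R M k p by rewrite !inE => /andP[/P_S].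
rewrite (card_in_S DS).
apply: le_lt_trans (ler_sum _ (fun s _ => count_closer_sq_le s)) _.
rewrite big_split /=; lra.
Qed.

Lemma is_nn_transfer : y0 \in P ->
  is_nn R (kdown R k eps) P' x y -> is_nn R k P x0 y0.
Proof.
move=> y0P /and3P[_ _ closer_lt].
have y0x0 : y0 != x0.
  by apply: contraNneq AB => e; apply/eqP/(in_sq_uniq N_gt0 k_gt0 x0A); rewrite -e.
rewrite /is_nn y0P y0x0 -(ltr_nat R).
have E_le : (#|` E|)%:R <= k%:R * (1 - eps) :> R.
  apply: le_trans (_ : (kdown R k eps)%:R <= _); last first.
    by rewrite truncn_le mulr_ge0 ?ler0n ?subr_ge0.
  by rewrite ler_nat (leq_trans (card_closer_le _ _ _)).
have D_ge : (#|` [fset z in P | (z != x0) && (dist R x0 z < dist R x0 y0)%R]| <= #|` D|)%N.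
  by apply/fsubset_leq_card/fsubsetP => z; rewrite !inE => /and3P[-> _ ->].
have := card_closer_lt; rewrite -(ler_nat R) in D_ge; lra.
Qed.

End Closer.

Lemma knn_adj_transfer (A B : sq M N) x y : A != B ->
  in_sq R M N k A x -> in_sq R M N k B y -> knn_adj R (kdown R k eps) P' x y ->
  exists x0 y0, [/\ in_sq R M N k A x0, in_sq R M N k B y0 & knn_adj R k P x0 y0].
Proof.
move=> AB xA yB /and3P[xP' yP' nn].
have [x0 x0P x0A] := exists_in_same_sq xP' xA.
have [y0 y0P y0B] := exists_in_same_sq yP' yB.
exists x0, y0; split => //; rewrite /knn_adj x0P y0P /=.
case/orP: nn => nn; first by rewrite (is_nn_transfer AB xA x0A yB y0B y0P nn).
have BA : B != A by rewrite eq_sym.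
by rewrite (is_nn_transfer BA yB y0B xA x0A x0P nn) orbT.
Qed.

End Transfer.

Lemma large_N_bound (R : realType) (eps : R) (M N : nat) : 0 < eps ->
  ((Num.truncn (2 * (M ^ 2)%:R / eps)).+1 <= N)%N -> (M ^ 2)%:R / N%:R <= eps / 2.
Proof.
move=> eps_gt0 N_ge; have N_gt0 : 0 < N%:R :> R by rewrite ltr0n (leq_trans _ N_ge).
have : 2 * (M ^ 2)%:R / eps < N%:R :> R.
  by apply: lt_le_trans (truncnS_gt _) _; rewrite ler_nat.
rewrite ltr_pdivrMr // => lt_N.
by rewrite ler_pdivrMr // mulrAC ler_pdivlMr //; lra.
Qed.

Theorem lemma8 (R : realType) (eps : R) (M : nat) :
  0 < eps -> eps < 2^-1 -> (40 <= M)%N ->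
  exists N0 : nat, forall N : nat, (N0 <= N)%N -> (21 %| N)%N ->
  forall (k : nat), (0 < k)%N ->
  forall (F : config R M N), good R M N k eps F ->
  forall (S1 S2 : sq M N), S1 != S2 ->
  forall (P P' : {fset pt R}),
    (forall p, p \in P -> in_S R M k p) ->
    (forall p, p \in P' -> in_S R M k p) ->
    belongs R M N k P F -> belongs R M N k P' F ->
    (forall x y, in_sq R M N k S1 x -> in_sq R M N k S2 y -> ~~ knn_adj R k P x y) ->
    (forall x y, in_sq R M N k S1 x -> in_sq R M N k S2 y -> ~~ knn_adj R (kdown R k eps) P' x y).
Proof.
move=> eps_gt0 eps_lt_half M_ge40.
exists (Num.truncn (2 * (M ^ 2)%:R / eps)).+1.
move=> N N_ge _ k k_gt0 F [notA notB] S1 S2 S12 P P' P_S P'_S PF P'F nonadj x y xS1 yS2.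
have M_gt0 : (0 < M)%N by apply: leq_trans M_ge40.
have N_gt0 : (0 < N)%N by apply: leq_trans N_ge.
have eps_le1 : eps <= 1 by lra.
apply/negP => /(knn_adj_transfer M_gt0 N_gt0 k_gt0 eps_le1 (large_N_bound eps_gt0 N_ge)
  notA notB P_S P'_S PF P'F S12 xS1 yS2) [x0 [y0 [x0S1 y0S2 adj]]].
by move/negP: (nonadj _ _ x0S1 y0S2).
Qed.
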